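(* Fix $k\ge1$. Let $\mathcal T_k$ be the set of self-avoiding walks on $\mathbb Z^2$ (including the empty walk) with North, East and South unit steps, starting at $(0,0)$ and confined to the strip $0\le y\le k$. For $w\in\mathcal T_k$ let $h(w)$ (resp. $h_c(w)$) be the number of horizontal steps at height different from $0$ and $k$ (resp. at height $0$ or $k$), let $v(w)$ (resp. $v_c(w)$) be the number of vertical steps ending at height different from $0$ and $k$ (resp. ending at height $0$ or $k$), and let $f(w)$ be the height of the endpoint of $w$. Define $$T_k(s)=\sum_{w\in\mathcal T_k}x^{h(w)}y^{v(w)}a^{h_c(w)}b^{v_c(w)}s^{f(w)}=\sum_{i=0}^kT_{k,i}s^i,$$ where $T_{k,i}$ (a series in $x,y,a,b$) counts walks ending at height $i$, and let $\tilde T_k(s)=T_k(s)-T_{k,0}-s^kT_{k,k}$ (walks not ending at height $0$ or $k$). Then, with $\bar s=1/s$, $$\left(1-\frac x{1-ys}-\frac{xy\bar s}{1-y\bar s}\right)\tilde T_k(s)=\frac{ys-(ys)^k}{1-ys}-\frac{x(ys)^k}{1-ys}\tilde T_k(1/y)-\frac x{1-y\bar s}\tilde T_k(y)+aT_{k,0}\frac{ys-(ys)^k}{1-ys}+aT_{k,k}\frac{ys^{k-1}-y^k}{1-y\bar s},$$ $$T_{k,0}=1+bx\,y^{-1}\tilde T_k(y)+aT_{k,0}+ab\,y^{k-1}T_{k,k},$$ $$T_{k,k}=by^{k-1}+bxy^{k-1}\tilde T_k(1/y)+ab\,y^{k-1}T_{k,0}+aT_{k,k}.$$ *)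

From HB Require Import structures.
From mathcomp Require Import all_boot all_order all_algebra.
From mathcomp Require Import all_classical all_reals all_analysis.
Set Implicit Arguments. Unset Strict Implicit. Unset Printing Implicit Defensive.
Import Order.TTheory GRing.Theory Num.Theory numFieldNormedType.Exports.
Local Open Scope ring_scope.

Inductive step := N | E | S.

Definition move (p : int * int) (st : step) : int * int :=
  match st with
  | N => (p.1, p.2 + 1)
  | E => (p.1 + 1, p.2)
  | S => (p.1, p.2 - 1)
  end.

Fixpoint pts (p : int * int) (w : seq step) : seq (int * int) :=
  match w with
  | [::] => [::]
  | st :: w' => let q := move p st in q :: pts q w'
  end.

Definition origin : int * int := (0, 0).

Definition visited (w : seq step) : seq (int * int) := origin :: pts origin w.

Definition self_avoiding (w : seq step) : bool := uniq (visited w).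

Definition in_strip (k : nat) (w : seq step) : bool :=
  all (fun p : int * int => (0 <= p.2) && (p.2 <= k%:Z)) (visited w).

Definition in_Tk (k : nat) (w : seq step) : bool := self_avoiding w && in_strip k w.

Definition end_height (w : seq step) : int := (last origin (visited w)).2.

Definition contact (k : nat) (z : int) : bool := (z == 0) || (z == k%:Z).

Fixpoint wt {R : realType} (k : nat) (x y a b : R) (p : int * int) (w : seq step) : R :=
  match w with
  | [::] => 1
  | st :: w' =>
      let q := move p st in
      (match st with
       | E => if contact k p.2 then a else x
       | _ => if contact k q.2 then b else y
       end) * wt k x y a b q w'
  end.

Fixpoint all_seqs (n : nat) : seq (seq step) :=
  match n with
  | 0 => [:: [::]]
  | n'.+1 => flatten [seq [:: N :: w; E :: w; S :: w] | w <- all_seqs n']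
  end.

Definition Tki_len {R : realType} (k i : nat) (x y a b : R) (n : nat) : R :=
  \sum_(w <- all_seqs n | in_Tk k w && (end_height w == i%:Z)) wt k x y a b origin w.

Definition Tki {R : realType} (k i : nat) (x y a b : R) : R :=
  limn (series (Tki_len k i x y a b : R^nat) : R^nat).

Definition Tk {R : realType} (k : nat) (x y a b s : R) : R :=
  \sum_(i < k.+1) Tki k i x y a b * s ^+ i.

Definition Ttilde {R : realType} (k : nat) (x y a b s : R) : R :=
  Tk k x y a b s - Tki k 0 x y a b - s ^+ k * Tki k k x y a b.

From HB Require Import structures.
From mathcomp Require Import all_boot all_order all_algebra.
From mathcomp Require Import all_classical all_reals all_analysis.
From mathcomp Require Import zify ring lra.
Import Order.TTheory GRing.Theory Num.Theory numFieldNormedType.Exports.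
Local Open Scope ring_scope.

(* Classify the walks of T_k ending at height i by their last step: F_i (east,
   or the empty walk), U_i (north), D_i (south).  Since a walk with steps N, E, S
   is self-avoiding exactly when no vertical step is immediately undone, deleting
   the last step gives the linear recurrences
     F_i = [i = 0] + (a|x) T_{k,i},  U_{j+1} = (b|y) (F_j + U_j),
     D_j = (b|y) (F_{j+1} + D_{j+1}),  U_0 = D_k = 0.
   Weighting the bulk heights 1..k-1 by s^i, they become
   (1 - ys) U(s) = ys (F_0 + x T~(s) - (F_{k-1} + U_{k-1}) s^(k-1)) and
   (s - y) D(s) = y (x T~(s) + a T_{k,k} s^k) - y (F_1 + D_1) s, while unrolling
   the final vertical run gives F_{k-1} + U_{k-1} = y^(k-1) (F_0 + x T~(1/y)) and
   y (F_1 + D_1) = x T~(y) + a y^k T_{k,k}.  Substituting into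
   T~(s) = x T~(s) + U(s) + D(s) yields the kernel equation; the boundary
   recurrences at heights 0 and k yield the other two.  All series converge
   since every step weight is at most 1/4 and there are 3^n walks of length n. *)

Definition nat_of_step (st : step) : nat := match st with N => 0 | E => 1 | S => 2 end.
Definition step_of_nat (n : nat) : step := match n with 0 => N | 1 => E | _ => S end.
Lemma nat_of_stepK : cancel nat_of_step step_of_nat. Proof. by case. Qed.
HB.instance Definition _ := Equality.copy step (can_type nat_of_stepK).

Definition endpoint (w : seq step) : int * int := last origin (visited w).

Lemma pts_rcons p w st :
  pts p (rcons w st) = rcons (pts p w) (move (last p (pts p w)) st).
Proof. by elim: w p => [|s w IH] p //=; rewrite IH. Qed.

Lemma visited_rcons w st :
  visited (rcons w st) = rcons (visited w) (move (endpoint w) st).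
Proof. by rewrite /visited /endpoint /= pts_rcons. Qed.

Lemma endpoint_rcons w st : endpoint (rcons w st) = move (endpoint w) st.
Proof. by rewrite {1}/endpoint visited_rcons last_rcons. Qed.

Lemma endpoint_visited w : endpoint w \in visited w.
Proof. by rewrite /endpoint /visited /=; exact: mem_last. Qed.

Definition backtrack (st l : step) : bool :=
  match st, l with N, S | S, N => true | _, _ => false end.

Definition behind (l : step) (e z : int * int) : bool :=
  (z.1 < e.1) || (z.1 == e.1) &&
    match l with N => z.2 < e.2 | S => e.2 < z.2 | E => false end.

Lemma behind_move l st e z :
  ~~ backtrack st l -> behind l e z -> behind st (move e st) z.
Proof. by rewrite /behind; case: st; case: l; case: e z => [? ?] [? ?] //=; lia. Qed.

Lemma behind_move_self st e : behind st (move e st) e.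
Proof. by rewrite /behind; case: st; case: e => ? ? /=; lia. Qed.

Lemma behind_move_backtrack l st e : behind l e (move e st) -> backtrack st l.
Proof. by rewrite /behind; case: st; case: l; case: e => ? ? //=; lia. Qed.

Lemma backtrack_visited w st :
  backtrack st (last E w) -> move (endpoint w) st \in visited w.
Proof.
case/lastP: w => [|w l]; first by case: st.
rewrite last_rcons endpoint_rcons visited_rcons mem_rcons inE => back.
apply/orP; right; suff -> : move (move (endpoint w) l) st = endpoint w.
  exact: endpoint_visited.
by case: st l back => -[] //; case: (endpoint w) => ? ? /=; rewrite ?addrK ?subrK.
Qed.

(* Everything a self-avoiding N/E/S walk visited lies west of its endpoint, or
   in its column on the side it came from. *)
Lemma visited_behind w : self_avoiding w ->
  {in visited w, forall z, z != endpoint w -> behind (last E w) (endpoint w) z}.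
Proof.
elim/last_ind: w => [|w st IH]; first by move=> _ z; rewrite inE => ->.
rewrite /self_avoiding visited_rcons rcons_uniq => /andP[fresh sa] z.
rewrite last_rcons endpoint_rcons mem_rcons inE => /predU1P[-> /eqP //|zw _].
have [-> | ze] := eqVneq z (endpoint w); first exact: behind_move_self.
apply: behind_move (IH sa z zw ze).
by apply: contra fresh; apply: backtrack_visited.
Qed.

Lemma move_visited w st : self_avoiding w ->
  (move (endpoint w) st \in visited w) = backtrack st (last E w).
Proof.
move=> sa; apply/idP/idP; last exact: backtrack_visited.
move=> vis; apply: (@behind_move_backtrack _ _ (endpoint w)).
apply: visited_behind => //.
by case: st {vis}; case: (endpoint w) => e1 e2; rewrite /move xpair_eqE /=; lia.
Qed.

Definition in_strip_point (k : nat) (p : int * int) : bool := (0 <= p.2) && (p.2 <= k%:Z).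

Lemma in_Tk_rcons k w st : in_Tk k (rcons w st) =
  [&& in_Tk k w, ~~ backtrack st (last E w) & in_strip_point k (move (endpoint w) st)].
Proof.
rewrite /in_Tk /self_avoiding /in_strip visited_rcons rcons_uniq all_rcons.
have [sa|] := boolP (uniq (visited w)); last by rewrite !andbF.
by rewrite move_visited //; case: backtrack; case: (all _ _); rewrite /= ?andbT ?andbF.
Qed.

Lemma in_strip_endpoint {k w} : in_Tk k w -> in_strip_point k (endpoint w).
Proof. by case/andP=> _ /allP; apply; exact: endpoint_visited. Qed.

Definition steps : seq step := [:: N; E; S].

Lemma all_seqsS n :
  all_seqs n.+1 = flatten [seq [seq st :: w | st <- steps] | w <- all_seqs n].
Proof. by []. Qed.

Lemma big_all_seqsS (R : nmodType) n (G : seq step -> R) :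
  \sum_(v <- all_seqs n.+1) G v = \sum_(w <- all_seqs n) \sum_(st <- steps) G (rcons w st).
Proof.
elim: n G => [|n IH] G; first by rewrite big_seq1 all_seqsS big_flatten big_seq1 big_map.
rewrite [in LHS]all_seqsS big_flatten big_map.
under eq_bigr do rewrite big_map.
rewrite IH [in RHS]all_seqsS big_flatten big_map; apply: eq_bigr => w _.
by rewrite big_map exchange_big.
Qed.

Definition contact_wt {T : Type} (k i : nat) (bulk boundary : T) : T :=
  if contact k i%:Z then boundary else bulk.

Lemma contact_wt_bulk {T : Type} (k i : nat) (u c : T) :
  (0 < i < k)%N -> contact_wt k i u c = u.
Proof. by move=> ik; rewrite /contact_wt /contact; case: ifP => //; lia. Qed.

Lemma contact_wt0 {T : Type} (k : nat) (u c : T) : contact_wt k 0 u c = c.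
Proof. by rewrite /contact_wt /contact eqxx. Qed.

Lemma contact_wtk {T : Type} (k : nat) (u c : T) : contact_wt k k u c = c.
Proof. by rewrite /contact_wt /contact eqxx orbT. Qed.

Section LastStep.
Context {R : realType} (k : nat) (x y a b : R).

Definition step_wt (p : int * int) (st : step) : R :=
  match st with
  | E => if contact k p.2 then a else x
  | _ => if contact k (move p st).2 then b else y
  end.

Lemma wt_rcons p w st :
  wt k x y a b p (rcons w st) = wt k x y a b p w * step_wt (last p (pts p w)) st.
Proof.
elim: w p => [|s w IH] p /=; first by rewrite mul1r mulr1; case: st.
by rewrite IH mulrA.
Qed.

(* The empty walk counts as ending with an east step ([last E [::] = E]). *)
Definition Tkil_len (i : nat) (l : step) (n : nat) : R :=
  \sum_(w <- all_seqs n | [&& in_Tk k w, end_height w == i%:Z & last E w == l])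
    wt k x y a b origin w.

Lemma Tki_lenE i : (Tki_len k i x y a b : R^nat) =
  Tkil_len i E + Tkil_len i N + Tkil_len i S.
Proof.
apply/funext => n; rewrite !fctE /Tki_len /Tkil_len big_mkcond.
rewrite !(big_mkcond (fun w => [&& _, _ & _])) -!big_split /=; apply: eq_bigr => w _.
case: (in_Tk k w); last by rewrite !addr0.
case: (end_height w == i%:Z); last by rewrite !addr0.
by case: (last E w); rewrite /= ?addr0 ?add0r.
Qed.

Lemma Tkil_len_rcons i l n : Tkil_len i l n.+1 =
  \sum_(w <- all_seqs n | [&& in_Tk k w, ~~ backtrack l (last E w),
          in_strip_point k (move (endpoint w) l) & (move (endpoint w) l).2 == i%:Z])
    wt k x y a b origin w * step_wt (endpoint w) l.
Proof.
rewrite /Tkil_len big_mkcond [in RHS]big_mkcond big_all_seqsS; apply: eq_bigr => w _.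
rewrite !big_cons big_nil addr0.
rewrite /end_height -!/(endpoint _) !in_Tk_rcons !endpoint_rcons !last_rcons !wt_rcons.
by case: l; rewrite !andbF /= ?addr0 ?add0r !andbT -!andbA.
Qed.

Lemma Tkil_len0 i l : Tkil_len i l 0 = ((i == 0%N) && (l == E))%:R.
Proof.
rewrite /Tkil_len /= big_cons big_nil /in_Tk /self_avoiding /in_strip /end_height /=.
by case: i => [|i]; case: l; rewrite /= ?lerz0 ?ler0z ?addr0.
Qed.

Lemma Tkil_len_E_rec i n : Tkil_len i E n.+1 = contact_wt k i x a * Tki_len k i x y a b n.
Proof.
rewrite Tkil_len_rcons /Tki_len mulr_sumr big_mkcond [in RHS]big_mkcond.
apply: eq_bigr => w _ /=; rewrite /end_height -/(endpoint w).
case T: (in_Tk k w); last by [].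
move: (in_strip_endpoint T); case: (endpoint w) => e1 e2; rewrite /in_strip_point /= => ->.
by case: eqP => [-> | _] //; rewrite mulrC.
Qed.

Lemma Tkil_len_N_rec j n : (j < k)%N ->
  Tkil_len j.+1 N n.+1 = contact_wt k j.+1 y b * (Tkil_len j E n + Tkil_len j N n).
Proof.
move=> jk; rewrite Tkil_len_rcons /Tkil_len !(big_mkcond (fun w => [&& _, _ & _])).
rewrite -big_split mulr_sumr; apply: eq_bigr => w _ /=.
rewrite /end_height -/(endpoint w).
case T: (in_Tk k w); last by rewrite /= addr0 mulr0.
move: (in_strip_endpoint T); case: (endpoint w) => e1 e2 /=; rewrite /in_strip_point /=.
have -> : (e2 + 1 == j.+1%:Z) = (e2 == j%:Z) by apply/eqP/eqP; lia.
case: eqP => [-> _ | _ _]; last by rewrite !andbF /= addr0 mulr0.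
have -> : j%:Z + 1 = j.+1%:Z by lia.
have -> : (0 <= j.+1%:Z <= k%:Z) by lia.
by case: (last E w); rewrite /= ?addr0 ?add0r ?mulr0 // mulrC.
Qed.

Lemma Tkil_len_N_bottom n : Tkil_len 0 N n.+1 = 0.
Proof.
rewrite Tkil_len_rcons big1 // => w /and4P[T _ _].
move: (in_strip_endpoint T); case: (endpoint w) => e1 e2 /andP[/= ? _] /eqP /=; lia.
Qed.

Lemma Tkil_len_S_rec j n : (j < k)%N ->
  Tkil_len j S n.+1 = contact_wt k j y b * (Tkil_len j.+1 E n + Tkil_len j.+1 S n).
Proof.
move=> jk; rewrite Tkil_len_rcons /Tkil_len !(big_mkcond (fun w => [&& _, _ & _])).
rewrite -big_split mulr_sumr; apply: eq_bigr => w _ /=.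
rewrite /end_height -/(endpoint w).
case T: (in_Tk k w); last by rewrite /= addr0 mulr0.
move: (in_strip_endpoint T); case: (endpoint w) => e1 e2 /=; rewrite /in_strip_point /=.
have -> : (e2 - 1 == j%:Z) = (e2 == j.+1%:Z) by apply/eqP/eqP; lia.
case: eqP => [-> _ | _ _]; last by rewrite !andbF /= addr0 mulr0.
have -> : j.+1%:Z - 1 = j%:Z by lia.
have -> : (0 <= j%:Z <= k%:Z) by lia.
by case: (last E w); rewrite /= ?addr0 ?add0r ?mulr0 // mulrC.
Qed.

Lemma Tkil_len_S_top n : Tkil_len k S n.+1 = 0.
Proof.
rewrite Tkil_len_rcons big1 // => w /and4P[T _ _].
move: (in_strip_endpoint T); case: (endpoint w) => e1 e2 /andP[_ /= ?] /eqP /=; lia.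
Qed.
End LastStep.

Section SeriesRecurrence.
Local Open Scope classical_set_scope.

Lemma lim_series_recS {R : realType} {u v : R^nat} {c : R} :
  cvgn (series v) -> (forall n, u n.+1 = c * v n) ->
  limn (series u) = u 0%N + c * limn (series v).
Proof.
move=> cv uS.
have shift n : series u n.+1 = u 0%N + c * series v n.
  rewrite /series /= big_nat_recl // mulr_sumr; congr (_ + _).
  by apply: eq_bigr => i _; exact: uS.
suff : series u @ \oo --> u 0%N + c * limn (series v) by move/cvg_lim; apply.
rewrite -cvg_shiftS; under eq_fun do rewrite shift.
by apply: cvgD; [exact: cvg_cst | apply: cvgM; [exact: cvg_cst | exact: cv]].
Qed.
End SeriesRecurrence.

Section Convergence.
Context {R : realType} (k : nat) {x y a b : R}.
Hypotheses (hx : 0 <= x <= 4^-1) (hy : 0 <= y <= 4^-1)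
  (ha : 0 <= a <= 4^-1) (hb : 0 <= b <= 4^-1).

Lemma wt_bound p w : 0 <= wt k x y a b p w <= 4^-1 ^+ size w.
Proof.
elim: w p => [|st w IH] p /=; first by rewrite lexx ler01.
have /andP[st0 st1] : 0 <= step_wt k x y a b p st <= 4^-1.
  by case: st; rewrite /step_wt; case: contact.
have /andP[w0 w1] := IH (move p st).
by rewrite exprS mulr_ge0 //= ler_pM.
Qed.

Lemma sum_all_seqs_pow n : \sum_(w <- all_seqs n) (4^-1 : R) ^+ size w = (3 / 4) ^+ n.
Proof.
elim: n => [|n IH]; first by rewrite big_seq1.
rewrite big_all_seqsS exprS -IH mulr_sumr; apply: eq_bigr => w _.
by rewrite !big_cons big_nil !size_rcons exprS; field.
Qed.

Lemma Tkil_len_bound i l n : 0 <= Tkil_len k x y a b i l n <= (3 / 4) ^+ n.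
Proof.
rewrite -sum_all_seqs_pow /Tkil_len big_mkcond; apply/andP; split.
  by apply: sumr_ge0 => w _; case: ifP => // _; case/andP: (wt_bound origin w).
apply: ler_sum => w _; case: ifP => _; first by case/andP: (wt_bound origin w).
by rewrite exprn_ge0 // invr_ge0.
Qed.

Lemma Tkil_len_cvg i l : cvgn (series (Tkil_len k x y a b i l)).
Proof.
apply: (@series_le_cvg R _ (geometric 1 (3 / 4))).
- by move=> n; case/andP: (Tkil_len_bound i l n).
- by move=> n; rewrite /geometric /= mul1r exprn_ge0.
- by move=> n; rewrite /geometric /= mul1r; case/andP: (Tkil_len_bound i l n).
- by apply: is_cvg_geometric_series; rewrite ger0_norm //; lra.
Qed.
End Convergence.

Section Limits.
Context {R : realType} {k : nat} {x y a b : R}.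
Hypothesis cvg_Tkil : forall i l, cvgn (series (Tkil_len k x y a b i l)).

Definition Tkil (i : nat) (l : step) : R := limn (series (Tkil_len k x y a b i l)).

Let cvg_TkilD i l i' l' :
  cvgn (series (Tkil_len k x y a b i l + Tkil_len k x y a b i' l')).
Proof. exact: is_cvg_seriesD. Qed.

Lemma cvg_Tki i : cvgn (series (Tki_len k i x y a b : R^nat)).
Proof. by rewrite Tki_lenE; apply: is_cvg_seriesD (cvg_TkilD i E i N) (cvg_Tkil i S). Qed.

Lemma Tki_split i : Tki k i x y a b = Tkil i E + Tkil i N + Tkil i S.
Proof.
rewrite /Tki Tki_lenE (lim_seriesD _ (cvg_Tkil i S)); last exact: cvg_TkilD.
by rewrite (lim_seriesD (cvg_Tkil i E) (cvg_Tkil i N)).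
Qed.

Lemma Tkil_E i : Tkil i E = (i == 0%N)%:R + contact_wt k i x a * Tki k i x y a b.
Proof.
rewrite /Tkil (lim_series_recS (cvg_Tki i) (Tkil_len_E_rec k x y a b i)).
by rewrite Tkil_len0 andbT.
Qed.

Lemma Tkil_N_bottom : Tkil 0 N = 0.
Proof.
rewrite /Tkil (lim_series_recS (c := 0) (cvg_Tkil 0 N)) => [|n].
  by rewrite Tkil_len0 mul0r addr0.
by rewrite Tkil_len_N_bottom mul0r.
Qed.

Lemma Tkil_N j : (j < k)%N -> Tkil j.+1 N = contact_wt k j.+1 y b * (Tkil j E + Tkil j N).
Proof.
move=> jk; rewrite /Tkil (lim_series_recS (c := contact_wt k j.+1 y b) (cvg_TkilD j E j N)).
  by rewrite Tkil_len0 add0r lim_seriesD.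
by move=> n; apply: Tkil_len_N_rec.
Qed.

Lemma Tkil_S_top : Tkil k S = 0.
Proof.
rewrite /Tkil (lim_series_recS (c := 0) (cvg_Tkil k S)) => [|n].
  by rewrite Tkil_len0 andbF mul0r addr0.
by rewrite Tkil_len_S_top mul0r.
Qed.

Lemma Tkil_S j : (j < k)%N -> Tkil j S = contact_wt k j y b * (Tkil j.+1 E + Tkil j.+1 S).
Proof.
move=> jk; rewrite /Tkil (lim_series_recS (c := contact_wt k j y b) (cvg_TkilD j.+1 E j.+1 S)).
  by rewrite Tkil_len0 andbF add0r lim_seriesD.
by move=> n; apply: Tkil_len_S_rec.
Qed.
End Limits.

(* [F i], [U i], [D i]: walks ending at height [i] whose last step is E (or
   that are empty), N, S. *)
Section KernelEquations.
Variable n : nat.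
Context {R : fieldType} {x y a b : R} {T F U D : nat -> R}.
Let k := n.+1.
Hypotheses (HT : forall i, T i = F i + U i + D i)
  (HF : forall i, F i = (i == 0%N)%:R + contact_wt k i x a * T i)
  (HU0 : U 0%N = 0)
  (HU : forall j, (j < k)%N -> U j.+1 = contact_wt k j.+1 y b * (F j + U j))
  (HDk : D k = 0)
  (HD : forall j, (j < k)%N -> D j = contact_wt k j y b * (F j.+1 + D j.+1)).

Lemma F0E : F 0%N = 1 + a * T 0%N.
Proof. by rewrite HF contact_wt0. Qed.

Lemma FkE : F k = a * T k.
Proof. by rewrite HF contact_wtk add0r. Qed.

Lemma F_bulk i : (0 < i < k)%N -> F i = x * T i.
Proof. by case: i => // i ik; rewrite HF contact_wt_bulk // add0r. Qed.

Lemma FU_sum j : (j <= n)%N -> F j + U j = \sum_(0 <= i < j.+1) y ^+ (j - i) * F i.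
Proof.
elim: j => [|j IH] jn; first by rewrite big_nat1 HU0 subnn mul1r addr0.
rewrite HU ?contact_wt_bulk ?IH; try by rewrite /k; lia.
rewrite [in RHS]big_nat_recr //= subnn expr0 mul1r [in RHS]addrC mulr_sumr.
congr (_ + _); apply: eq_big_nat => i ij.
by rewrite mulrA -exprS subSn //; lia.
Qed.

Lemma FD_sum r : (r <= n)%N ->
  F (k - r)%N + D (k - r)%N = \sum_(0 <= t < r.+1) y ^+ t * F (k - r + t)%N.
Proof.
elim: r => [|r IH] rn; first by rewrite big_nat1 subn0 addn0 HDk mul1r addr0.
rewrite (HD (k - r.+1)) ?contact_wt_bulk; try by rewrite /k; lia.
rewrite (_ : (k - r.+1).+1 = (k - r)%N) ?IH; try by rewrite /k; lia.
rewrite [in RHS]big_nat_recl //= expr0 mul1r addn0 mulr_sumr; congr (_ + _).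
by apply: eq_big_nat => i _; rewrite mulrA -exprS; congr (_ * F _); rewrite /k; lia.
Qed.

Definition bulk_gf (G : nat -> R) (s : R) : R := \sum_(0 <= j < n) G j.+1 * s ^+ j.+1.

Lemma bulk_gfE (s : R) :
  \sum_(i < n.+2) T i * s ^+ i - T 0%N - s ^+ k * T k = bulk_gf T s.
Proof.
rewrite -(big_mkord xpredT (fun i => T i * s ^+ i)) big_nat_recl // big_nat_recr //=.
by rewrite expr0 mulr1 /bulk_gf /k; ring.
Qed.

Lemma FU_top : y != 0 -> F n + U n = y ^+ n * (F 0%N + x * bulk_gf T y^-1).
Proof.
move=> y0; rewrite FU_sum // big_nat_recl // subn0 mulrDr; congr (_ + _).
rewrite /bulk_gf !mulr_sumr; apply: eq_big_nat => i i_n.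
rewrite F_bulk; last by rewrite /k; lia.
by rewrite exprVn exprB ?unitfE //; ring.
Qed.

Lemma FD_bottom : y * (F 1%N + D 1%N) = x * bulk_gf T y + a * y ^+ k * T k.
Proof.
have := @FD_sum n (leqnn n); rewrite (_ : (k - n)%N = 1%N); last by rewrite /k; lia.
move=> ->; rewrite big_nat_recr //= mulrDr; congr (_ + _).
  rewrite /bulk_gf !mulr_sumr; apply: eq_big_nat => i i_n.
  by rewrite add1n F_bulk; [rewrite exprS; ring | rewrite /k; lia].
by rewrite add1n FkE /k exprS; ring.
Qed.

Lemma bulk_gfU s : (1 - y * s) * bulk_gf U s =
  y * s * (F 0%N + x * bulk_gf T s - (F n + U n) * s ^+ n).
Proof.
have shift : bulk_gf U s = y * s * \sum_(0 <= j < n) (F j + U j) * s ^+ j.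
  rewrite /bulk_gf mulr_sumr; apply: eq_big_nat => j j_n.
  by rewrite HU ?contact_wt_bulk; [rewrite exprS; ring | rewrite /k; lia..].
have full : \sum_(0 <= j < n.+1) (F j + U j) * s ^+ j =
    F 0%N + x * bulk_gf T s + bulk_gf U s.
  rewrite big_nat_recl // HU0 addr0 mulr1 /bulk_gf mulr_sumr -addrA -big_split /=.
  congr (_ + _); apply: eq_big_nat => j j_n.
  by rewrite F_bulk; [ring | rewrite /k; lia].
move: full; rewrite big_nat_recr //= => /(canRL (addrK _)) shifted.
by rewrite mulrBl mul1r [X in X - _]shift -mulrBr shifted; ring.
Qed.

Lemma bulk_gfD s : (s - y) * bulk_gf D s =
  y * (x * bulk_gf T s + a * T k * s ^+ k) - y * (F 1%N + D 1%N) * s.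
Proof.
have shift : s * bulk_gf D s = y * \sum_(0 <= j < n) (F j.+2 + D j.+2) * s ^+ j.+2.
  rewrite /bulk_gf !mulr_sumr; apply: eq_big_nat => j j_n.
  by rewrite HD ?contact_wt_bulk; [rewrite [s ^+ j.+2]exprS; ring | rewrite /k; lia..].
have full : \sum_(0 <= j < n.+1) (F j.+1 + D j.+1) * s ^+ j.+1 =
    x * bulk_gf T s + bulk_gf D s + (F k + D k) * s ^+ k.
  rewrite big_nat_recr //= /bulk_gf mulr_sumr -big_split /=; congr (_ + _).
  by apply: eq_big_nat => j j_n; rewrite F_bulk; [ring | rewrite /k; lia].
move: full; rewrite big_nat_recl //= expr1 HDk FkE addr0 => /(canRL (addKr _)) shifted.
by rewrite mulrBl shift shifted; ring.
Qed.

Lemma bulk_gf_split s : bulk_gf T s = x * bulk_gf T s + bulk_gf U s + bulk_gf D s.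
Proof.
rewrite /bulk_gf mulr_sumr -!big_split /=; apply: eq_big_nat => j j_n.
by rewrite {1}HT F_bulk; [ring | rewrite /k; lia].
Qed.

Lemma kernel_equation s : s != 0 -> y * s != 1 -> y * s^-1 != 1 -> y != 0 ->
  (1 - x / (1 - y * s) - x * y * s^-1 / (1 - y * s^-1)) * bulk_gf T s
    = (y * s - (y * s) ^+ k) / (1 - y * s)
      - x * (y * s) ^+ k / (1 - y * s) * bulk_gf T y^-1
      - x / (1 - y * s^-1) * bulk_gf T y
      + a * T 0%N * (y * s - (y * s) ^+ k) / (1 - y * s)
      + a * T k * (y * s ^+ k.-1 - y ^+ k) / (1 - y * s^-1).
Proof.
move=> s0 ys1 ysV1 y0.
have ys_ne : 1 - y * s != 0 by rewrite subr_eq0 eq_sym.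
have sy_ne : s - y != 0.
  by apply: contraNneq ysV1 => /eqP; rewrite subr_eq0 => /eqP <-; rewrite divff.
have := bulk_gf_split s.
rewrite -(mulKf ys_ne (bulk_gf U s)) bulk_gfU FU_top // F0E.
rewrite -(mulKf sy_ne (bulk_gf D s)) bulk_gfD FD_bottom.
move/eqP; rewrite -subr_eq0 => /eqP split_eq.
apply/eqP; rewrite -subr_eq0; apply/eqP; rewrite -[RHS]split_eq /k /= !exprS exprMn.
by field; rewrite ys_ne sy_ne s0.
Qed.

Lemma T0_equation : y != 0 ->
  T 0%N = 1 + b * x * y^-1 * bulk_gf T y + a * T 0%N + a * b * y ^+ n * T k.
Proof.
move=> y0; rewrite {1}HT F0E HU0 HD // contact_wt0.
rewrite -[F 1%N + D 1%N](mulKf y0) FD_bottom /k exprS.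
by field.
Qed.

Lemma Tk_equation : y != 0 ->
  T k = b * y ^+ n + b * x * y ^+ n * bulk_gf T y^-1 + a * b * y ^+ n * T 0%N + a * T k.
Proof. by move=> y0; rewrite {1}HT FkE HDk HU // contact_wtk FU_top // F0E; ring. Qed.
End KernelEquations.

Theorem lemma2p3 (R : realType) (k : nat) (hk : (1 <= k)%N)
  (x y a b : R)
  (hx : 0 < x < 4^-1) (hy : 0 < y < 4^-1) (ha : 0 < a < 4^-1) (hb : 0 < b < 4^-1)
  (s : R) (hs : s != 0) (hys : y * s != 1) (hysb : y * s^-1 != 1) :
  let T0 := Tki k 0 x y a b in
  let TK := Tki k k x y a b in
  let Tt := Ttilde k x y a b in
  [/\ (1 - x / (1 - y * s) - x * y * s^-1 / (1 - y * s^-1)) * Tt s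
        = (y * s - (y * s) ^+ k) / (1 - y * s)
          - x * (y * s) ^+ k / (1 - y * s) * Tt y^-1
          - x / (1 - y * s^-1) * Tt y
          + a * T0 * (y * s - (y * s) ^+ k) / (1 - y * s)
          + a * TK * (y * s ^+ k.-1 - y ^+ k) / (1 - y * s^-1),
      T0 = 1 + b * x * y^-1 * Tt y + a * T0 + a * b * y ^+ k.-1 * TK
    & TK = b * y ^+ k.-1 + b * x * y ^+ k.-1 * Tt y^-1
           + a * b * y ^+ k.-1 * T0 + a * TK].
Proof.
case: k hk => [//|n] _ /=.
have y0 : y != 0 by case/andP: hy => y_gt0 _; rewrite gt_eqF.
have weak (c : R) : 0 < c < 4^-1 -> 0 <= c <= 4^-1 by case/andP=> c_gt0 c_lt; rewrite !ltW.
have cvg := Tkil_len_cvg n.+1 (weak x hx) (weak y hy) (weak a ha) (weak b hb).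
have HT := Tki_split cvg; have HF := Tkil_E cvg.
have HU0 := Tkil_N_bottom cvg; have HU := Tkil_N cvg.
have HDk := Tkil_S_top cvg; have HD := Tkil_S cvg.
have TtE t : Ttilde n.+1 x y a b t = bulk_gf n (fun i => Tki n.+1 i x y a b) t.
  by rewrite -bulk_gfE.
rewrite !TtE; split.
- exact: (kernel_equation n HT HF HU0 HU HDk HD).
- exact: (T0_equation n HT HF HU0 HDk HD).
- exact: (Tk_equation n HT HF HU0 HU HDk).
Qed.
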